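(* Let $\mathbb F=\mathbb F_0(\omega)$ be a degree-$2$ extension field of a field $\mathbb F_0$. Let $M$ be a vertically $5$-connected $\mathbb F$-represented matroid of rank $r$ and let $e$ be a nonloop of $M$ such that $M/\!\!/e\approx M\binom{u_0+\omega v_0}{R}$ for some $u_0,v_0\in\mathbb F_0^{E(M)}$ and $R\in\mathbb F_0^{[r-2]\times E(M)}$. Then there are matrices $P,Q\in\mathbb F_0^{[2]\times E(M)}$ such that $M\approx M\binom{P+\omega Q}{R}$ and either (1) there is a partition $(I,J)$ of $E(M)$ such that $\mathrm{rank}(R[I])+\mathrm{rank}(Q[J])\le 1$, or (2) the matrix $$W^+=\begin{pmatrix} I_2 & 0 & -\omega I_2 & P\\ 0 & I_2 & I_2 & Q\\ 0&0&0&R\end{pmatrix},$$ whose columns are indexed by $S\cup X\cup E(M)$ where the first four columns form a set $S$ and the next two columns form a set $X$ (with rows grouped as $2,2,r-2$), satisfies $\kappa_{M(W^+)}(S\cup X,K)=4$ for every set $K\subseteq E(M)$ with $r_M(K)\ge 4$.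
   Context: Represented matroids: an $\mathbb F$-represented matroid on $E$ is a pair $(U,E)$ with $U$ a subspace of $\mathbb F^E$; rank $r(X)=\dim U[X]$ ($U[X]$ the projection to $\mathbb F^X$). For a matrix $A$ with column set $E$, $M(A)=(\mathrm{rowspace}(A),E)$; deletion, contraction (via duality $(U,E)^*=(U^\perp,E)$, $M/X=(M^*\setminus X)^*$) and minors are as usual. $M(A_1)\approx M(A_2)$ means some matrix row-equivalent to $A_1$ is obtained from $A_2$ by scaling columns by nonzero scalars. $[m]=\{1,\dots,m\}$; $A[I]$ is the submatrix on columns $I$; $\binom{X}{Y}$ denotes vertical stacking; $I_k$ is the identity matrix. For a nonloop $e$ of a represented matroid $M$, $M/\!\!/e$ denotes $M'/e'$, where $M'$ is obtained from $M$ by adding an element $e'$ parallel to $e$ (so $E(M/\!\!/e)=E(M)$ and $e$ is a loop of it). $\lambda_M(Z)=r_M(Z)+r_M(E(M)-Z)-r(M)$; for disjoint $A,B$, $\kappa_M(A,B)=\min\{\lambda_M(Z): A\subseteq Z\subseteq E(M)-B\}$. A set $A$ is vertically $k$-separating if $\lambda_M(A)<k$ and $\min(r_M(A),r_M(E(M)-A))\ge k$; $M$ is vertically $k$-connected if it has no vertically $k'$-separating set for any $k'\le k$. *)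

From HB Require Import structures.
From mathcomp Require Import all_boot all_order all_algebra all_field.
Set Implicit Arguments. Unset Strict Implicit. Unset Printing Implicit Defensive.
Import GRing.Theory.
Local Open Scope ring_scope.

(* A represented matroid (U, E) with E = 'I_n is given by a matrix A whose
   row space is U; M(A) = (rowspace A, 'I_n). *)

Section RepMatroid.
Variable K : fieldType.

(* projection U[X], realised by zeroing the columns outside X
   (same dimension as the projection to K^X) *)
Definition colrestr m n (A : 'M[K]_(m, n)) (X : {set 'I_n}) : 'M[K]_(m, n) :=
  A *m diag_mx (\row_j (j \in X)%:R).

Definition mrank m n (A : 'M[K]_(m, n)) (X : {set 'I_n}) : nat :=
  \rank (colrestr A X).

Definition mlambda m n (A : 'M[K]_(m, n)) (Z : {set 'I_n}) : nat :=
  (mrank A Z + mrank A (~: Z) - \rank A)%N.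

Definition mkappa m n (A : 'M[K]_(m, n)) (S T : {set 'I_n}) : nat :=
  \big[minn/mlambda A S]_(Z : {set 'I_n} | (S \subset Z) && (Z \subset ~: T))
     mlambda A Z.

Definition vert_sep m n (A : 'M[K]_(m, n)) (k : nat) (Z : {set 'I_n}) : Prop :=
  (mlambda A Z < k)%N /\ (k <= minn (mrank A Z) (mrank A (~: Z)))%N.

Definition vert_conn m n (A : 'M[K]_(m, n)) (k : nat) : Prop :=
  forall k' : nat, (k' <= k)%N -> forall Z : {set 'I_n}, ~ vert_sep A k' Z.

Definition nonloop m n (A : 'M[K]_(m, n)) (e : 'I_n) : Prop :=
  mrank A [set e] = 1%N.

(* duality: (U, E)^* = (U^perp, E) *)
Definition dualmx m n (A : 'M[K]_(m, n)) : 'M[K]_n := kermx A^T.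

Definition delete_last m n (A : 'M[K]_(m, n.+1)) : 'M[K]_(m, n) :=
  colsub (lift ord_max) A.

(* contraction M / f = (M^* \ f)^*, for f the last element *)
Definition contract_last m n (A : 'M[K]_(m, n.+1)) : 'M[K]_n :=
  dualmx (delete_last (dualmx A)).

Definition par_ext m n (A : 'M[K]_(m, n)) (e : 'I_n) : 'M[K]_(m, n.+1) :=
  \matrix_(i, j) A i (oapp id e (unlift ord_max j)).

Definition pcontract m n (A : 'M[K]_(m, n)) (e : 'I_n) : 'M[K]_n :=
  contract_last (par_ext A e).

Definition mapprox m k n (A1 : 'M[K]_(m, n)) (A2 : 'M[K]_(k, n)) : Prop :=
  exists d : 'rV[K]_n, (forall j, d 0 j != 0) /\ (A1 == A2 *m diag_mx d)%MS.

End RepMatroid.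

Section Ext.
Variables (F0 : fieldType) (L : fieldExtType F0).

Definition inj_mx m n (B : 'M[F0]_(m, n)) : 'M[L]_(m, n) := map_mx (fun a => a%:A) B.

Definition stackPQR (w : L) r n (P Q : 'M[F0]_(2, n)) (R : 'M[F0]_(r, n))
  : 'M[L]_(2 + r, n) :=
  col_mx (inj_mx P + w *: inj_mx Q) (inj_mx R).

Definition Wplus (w : L) r n (P Q : 'M[F0]_(2, n)) (R : 'M[F0]_(r, n))
  : 'M[L]_(2 + 2 + r, (4 + 2) + n) :=
  row_mx
    (col_mx (row_mx (1%:M : 'M[L]_(2 + 2))
                    (col_mx ((- w)%:M : 'M[L]_2) (1%:M : 'M[L]_2)))
            (0 : 'M[L]_(r, 4 + 2)))
    (col_mx (col_mx (inj_mx P) (inj_mx Q)) (inj_mx R)).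

End Ext.

(* Write L = F0 + F0 w.  Adding one row of A to the given representation of
   M //e yields A ~ (G1; R) with G1 two rows over L, and W^+ is built from the
   F0-coordinates P, Q of G1.  If kappa(S u X, K) < 4 for some K of rank at least
   4, there is Z with S u X in Z and lambda_{W^+}(Z) <= 3.  Its trace Y on E(M)
   then gives lambda_M(Y) <= 3 while E - Y contains K, so by vertical
   5-connectivity E - Y spans M.  On E - Y the row space of (G1; R) has dimension
   r, yet the F0-span of (P; Q; R) there has dimension at most
   r + 1 - rank R[Y]; counting dimensions, the rows of G1 can be rechosen so that
   their w-coordinates on E - Y have rank at most 1 - rank R[Y], which is
   outcome (1) with I = Y. *)

From HB Require Import structures.
From mathcomp Require Import all_boot all_order all_algebra all_field.
From mathcomp Require Import ring zify.
Set Implicit Arguments. Unset Strict Implicit. Unset Printing Implicit Defensive.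
Import GRing.Theory.
Local Open Scope ring_scope.

Section Injection.
Variables (F0 : fieldType) (L : fieldExtType F0).
Local Notation inj := (inj_mx L).

Lemma inj_rank m n (B : 'M[F0]_(m, n)) : \rank (inj B) = \rank B.
Proof. exact: (mxrank_map (in_alg L)). Qed.

Lemma inj_col m1 m2 n (B1 : 'M[F0]_(m1, n)) (B2 : 'M[F0]_(m2, n)) :
  inj (col_mx B1 B2) = col_mx (inj B1) (inj B2).
Proof. exact: map_col_mx. Qed.

Lemma injD m n (B1 B2 : 'M[F0]_(m, n)) : inj (B1 + B2) = inj B1 + inj B2.
Proof. exact: (map_mxD (in_alg L)). Qed.

Lemma injM m p n (B1 : 'M[F0]_(m, p)) (B2 : 'M[F0]_(p, n)) :
  inj (B1 *m B2) = inj B1 *m inj B2.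
Proof. exact: (map_mxM (in_alg L)). Qed.

Lemma injZ m n a (B : 'M[F0]_(m, n)) : inj (a *: B) = a%:A *: inj B.
Proof. exact: (map_mxZ (in_alg L)). Qed.

Lemma inj0 m n : inj (0 : 'M[F0]_(m, n)) = 0.
Proof. exact: (map_mx0 (in_alg L)). Qed.

End Injection.

Section MatrixFacts.
Variable K : fieldType.

Lemma sub_col_mxl m1 m2 n (A : 'M[K]_(m1, n)) (B : 'M_(m2, n)) : (A <= col_mx A B)%MS.
Proof. by rewrite -addsmxE addsmxSl. Qed.

Lemma sub_col_mxr m1 m2 n (A : 'M[K]_(m1, n)) (B : 'M_(m2, n)) : (B <= col_mx A B)%MS.
Proof. by rewrite -addsmxE addsmxSr. Qed.

Lemma rank_col_mx_leq m1 m2 n (A : 'M[K]_(m1, n)) (B : 'M_(m2, n)) :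
  (\rank (col_mx A B) <= \rank A + \rank B)%N.
Proof. by rewrite -addsmxE; case: (mxrank_adds_leqif A B). Qed.

Lemma col_mxCA_eqmx m1 m2 m3 n (A : 'M[K]_(m1, n)) (B : 'M_(m2, n)) (C : 'M_(m3, n)) :
  (col_mx (col_mx A B) C == col_mx B (col_mx A C))%MS.
Proof.
apply/andP; split; rewrite !col_mx_sub ?sub_col_mxl ?sub_col_mxr ?andbT /=.
  rewrite (submx_trans (sub_col_mxl A C) (sub_col_mxr B _)).
  exact: submx_trans (sub_col_mxr A C) (sub_col_mxr B _).
rewrite (submx_trans (sub_col_mxr A B) (sub_col_mxl _ C)).
exact: submx_trans (sub_col_mxl A B) (sub_col_mxl _ C).
Qed.

Lemma col_mxAC_eqmx m1 m2 m3 n (A : 'M[K]_(m1, n)) (B : 'M_(m2, n)) (C : 'M_(m3, n)) :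
  (col_mx (col_mx A B) C == col_mx (col_mx A C) B)%MS.
Proof.
apply/andP; split; rewrite !col_mx_sub ?sub_col_mxr ?andbT /=.
  rewrite (submx_trans (sub_col_mxl A C) (sub_col_mxl _ B)).
  exact: submx_trans (sub_col_mxr A C) (sub_col_mxl _ B).
rewrite (submx_trans (sub_col_mxl A B) (sub_col_mxl _ C)).
exact: submx_trans (sub_col_mxr A B) (sub_col_mxl _ C).
Qed.

Lemma col_mx_eqmx m1 m2 m3 m4 n (A1 : 'M[K]_(m1, n)) (A2 : 'M_(m2, n))
    (B1 : 'M_(m3, n)) (B2 : 'M_(m4, n)) :
  (A1 == A2)%MS -> (B1 == B2)%MS -> (col_mx A1 B1 == col_mx A2 B2)%MS.
Proof.
move=> /eqmxP eqA /eqmxP eqB; apply/eqmxP.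
exact: eqmx_trans (eqmx_sym (addsmxE _ _)) (eqmx_trans (adds_eqmx eqA eqB) (addsmxE _ _)).
Qed.

Lemma row_comb_sub_of_rank_lt k p n (X : 'M[K]_(k, n)) (D : 'M_(p, n)) :
  (\rank (col_mx X D) < \rank D + k)%N -> exists2 c : 'rV_k, c != 0 & (c *m X <= D)%MS.
Proof.
move=> rank_lt; have [rX_lt | rX_ge] := ltnP (\rank X) k.
  have : kermx X != 0 by rewrite -mxrank_eq0 mxrank_ker -lt0n subn_gt0.
  by case/rowV0Pn => c /sub_kermxP cX c0; exists c; rewrite ?cX ?sub0mx.
have : (X :&: D)%MS != 0.
  have := mxrank_sum_cap X D; rewrite -addsmxE in rank_lt.
  rewrite -mxrank_eq0 -lt0n; lia.
case/rowV0Pn => v vXD v0; have vX : (v <= X)%MS := submx_trans vXD (capmxSl _ _).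
exists (v *m pinvmx X); last by rewrite mulmxKpV // (submx_trans vXD (capmxSr _ _)).
by apply: contraNneq v0 => c0; rewrite -(mulmxKpV vX) c0 mul0mx.
Qed.

Lemma eqmx_col_row'_comb k p n (G1 : 'M[K]_(k.+1, n)) (B : 'M_(p, n))
    (alpha : 'rV[K]_k.+1) (b : 'rV_n) j :
  alpha 0 j != 0 -> (b <= B)%MS ->
  (col_mx (row' j G1) (col_mx (alpha *m G1 + b) B) == col_mx G1 B)%MS.
Proof.
move=> alpha_j bB; set C := col_mx (row' j G1) _.
have row'_sub : (row' j G1 <= G1)%MS by rewrite row'Esub rowsubE submxMl.
have BC : (B <= C)%MS.
  exact: submx_trans (sub_col_mxr (alpha *m G1 + b) B) (sub_col_mxr (row' j G1) _).
apply/andP; split.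
  rewrite !col_mx_sub sub_col_mxr andbT (submx_trans row'_sub (sub_col_mxl _ _)) /=.
  rewrite addmx_sub ?(submx_trans (submxMl _ _) (sub_col_mxl _ _)) //.
  exact: submx_trans bB (sub_col_mxr _ _).
have G1_C : (G1 <= C)%MS.
  have other_rows i : i != j -> (row i G1 <= C)%MS.
    case: (unliftP j i) => [i' ->|->]; last by rewrite eqxx.
    have -> : row (lift j i') G1 = row i' (row' j G1) by apply/rowP => l; rewrite !mxE.
    by move=> _; exact: submx_trans (row_sub _ _) (sub_col_mxl _ _).
  apply/row_subP => i; case: (eqVneq i j) => [->|]; last exact: other_rows.
  suff : (alpha 0 j *: row j G1 <= C)%MS.
    by move/(scalemx_sub (alpha 0 j)^-1); rewrite scalerA mulVf // scale1r.
  have -> : alpha 0 j *: row j G1 =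
      (alpha *m G1 + b) - b - \sum_(i | i != j) alpha 0 i *: row i G1.
    by rewrite addrK (mulmx_sum_row alpha G1) (bigD1 j) //= addrK.
  have sumC : ((alpha *m G1 + b)%R <= C)%MS.
    exact: submx_trans (sub_col_mxl _ B) (sub_col_mxr (row' j G1) _).
  apply: addmx_sub; first by rewrite addmx_sub // eqmx_opp (submx_trans bB BC).
  by rewrite eqmx_opp; apply: summx_sub => i' ij; rewrite scalemx_sub ?other_rows.
by rewrite col_mx_sub G1_C BC.
Qed.

End MatrixFacts.

Section Restriction.
Variable K : fieldType.

Lemma colrestrE m n (A : 'M[K]_(m, n)) (X : {set 'I_n}) :
  colrestr A X = \matrix_(i, j) (if j \in X then A i j else 0).
Proof.
apply/matrixP => i j; rewrite /colrestr mul_mx_diag !mxE.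
by case: (j \in X); rewrite ?mulr1 ?mulr0.
Qed.

Lemma colrestrM m p n (B : 'M[K]_(p, m)) (A : 'M[K]_(m, n)) (X : {set 'I_n}) :
  colrestr (B *m A) X = B *m colrestr A X.
Proof. by rewrite /colrestr mulmxA. Qed.

Lemma colrestr_col m1 m2 n (A1 : 'M[K]_(m1, n)) (A2 : 'M[K]_(m2, n)) (X : {set 'I_n}) :
  colrestr (col_mx A1 A2) X = col_mx (colrestr A1 X) (colrestr A2 X).
Proof. by rewrite /colrestr mul_col_mx. Qed.

Lemma colrestr_row m p1 p2 (A : 'M[K]_(m, p1)) (B : 'M[K]_(m, p2))
    (X : {set 'I_(p1 + p2)}) :
  colrestr (row_mx A B) X =
  row_mx (colrestr A [set j | lshift p2 j \in X]) (colrestr B [set k | rshift p1 k \in X]).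
Proof.
rewrite -[LHS]hsubmxK !colrestrE; congr row_mx; apply/matrixP => i k;
  by rewrite !(row_mxEl, row_mxEr, mxE) inE.
Qed.

Lemma colrestrD m n (A1 A2 : 'M[K]_(m, n)) (X : {set 'I_n}) :
  colrestr (A1 + A2) X = colrestr A1 X + colrestr A2 X.
Proof. exact: mulmxDl. Qed.

Lemma colrestrN m n (A : 'M[K]_(m, n)) (X : {set 'I_n}) : colrestr (- A) X = - colrestr A X.
Proof. exact: mulNmx. Qed.

Lemma colrestrZ m n a (A : 'M[K]_(m, n)) (X : {set 'I_n}) :
  colrestr (a *: A) X = a *: colrestr A X.
Proof. by rewrite /colrestr scalemxAl. Qed.

Lemma colrestrT m n (A : 'M[K]_(m, n)) : colrestr A setT = A.
Proof. by apply/matrixP => i j; rewrite colrestrE mxE in_setT. Qed.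

Lemma colrestr0 m n (A : 'M[K]_(m, n)) : colrestr A set0 = 0.
Proof. by apply/matrixP => i j; rewrite colrestrE !mxE in_set0. Qed.

Lemma colrestrS m1 m2 n (A1 : 'M[K]_(m1, n)) (A2 : 'M[K]_(m2, n)) (X : {set 'I_n}) :
  (A1 <= A2)%MS -> (colrestr A1 X <= colrestr A2 X)%MS.
Proof. exact: submxMr. Qed.

Lemma mrankT m n (A : 'M[K]_(m, n)) : mrank A setT = \rank A.
Proof. by rewrite /mrank colrestrT. Qed.

Lemma mrankS m n (A : 'M[K]_(m, n)) (X Y : {set 'I_n}) :
  X \subset Y -> (mrank A X <= mrank A Y)%N.
Proof.
move=> sXY; rewrite /mrank; have -> : colrestr A X = colrestr (colrestr A Y) X.
  apply/matrixP => i j; rewrite !colrestrE !mxE.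
  by case: ifP => // jX; rewrite (subsetP sXY _ jX).
exact: mxrankM_maxl.
Qed.

Lemma mrank_leq_rank m n (A : 'M[K]_(m, n)) (X : {set 'I_n}) : (mrank A X <= \rank A)%N.
Proof. exact: mxrankM_maxl. Qed.

Lemma rank_leq_mrank_split m n (A : 'M[K]_(m, n)) (X : {set 'I_n}) :
  (\rank A <= mrank A X + mrank A (~: X))%N.
Proof.
have splitA : A = colrestr A X + colrestr A (~: X).
  apply/matrixP => i j; rewrite !colrestrE !mxE in_setC.
  by case: (j \in X); rewrite ?addr0 ?add0r.
by rewrite {1}splitA mxrank_add.
Qed.

Lemma mrank_eqmx_diag m1 m2 n (A : 'M[K]_(m1, n)) (B : 'M[K]_(m2, n)) (d : 'rV[K]_n)
    (X : {set 'I_n}) :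
  (forall j, d 0 j != 0) -> (A == B *m diag_mx d)%MS -> mrank A X = mrank B X.
Proof.
move=> d_nz /andP [AB BA]; rewrite /mrank.
have -> : \rank (colrestr A X) = \rank (colrestr (B *m diag_mx d) X).
  by apply/eqmx_rank/andP; split; apply: colrestrS.
have -> : colrestr (B *m diag_mx d) X = colrestr B X *m diag_mx d.
  apply/matrixP => i j; rewrite !colrestrE !mul_mx_diag !mxE.
  by case: ifP; rewrite ?mul0r.
rewrite mxrankMfree // row_free_unit unitmxE det_diag unitfE.
by apply/prodf_neq0 => j _.
Qed.

End Restriction.

Lemma colrestr_map (K K' : fieldType) m n (f : K -> K') (M : 'M[K]_(m, n))
    (X : {set 'I_n}) :
  f 0 = 0 -> colrestr (map_mx f M) X = map_mx f (colrestr M X).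
Proof. by move=> f0; apply/matrixP => i j; rewrite !colrestrE !mxE; case: ifP. Qed.

Section Connectivity.
Variable K : fieldType.

Lemma vert_conn_mrank_eq k m1 m2 n (A : 'M[K]_(m1, n)) (B : 'M[K]_(m2, n)) :
  (forall X, mrank A X = mrank B X) -> vert_conn A k -> vert_conn B k.
Proof.
move=> AB connA k' k'k Z; rewrite /vert_sep /mlambda -!mrankT -!AB !mrankT.
exact: connA.
Qed.

Lemma vert_conn_min_mrank_leq k m n (A : 'M[K]_(m, n)) (Z : {set 'I_n}) :
  vert_conn A k -> (mlambda A Z < k)%N ->
  (minn (mrank A Z) (mrank A (~: Z)) <= mlambda A Z)%N.
Proof.
move=> connA lt_k; rewrite leqNgt; apply/negP => lt_min.
exact: (connA (mlambda A Z).+1 lt_k Z).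
Qed.

Lemma vert_conn_mrank_compl k m n (A : 'M[K]_(m, n)) (Z : {set 'I_n}) :
  vert_conn A k -> (mlambda A Z < k)%N -> (mlambda A Z < mrank A (~: Z))%N ->
  mrank A (~: Z) = \rank A.
Proof.
move=> connA lt_k lt_compl; have := vert_conn_min_mrank_leq connA lt_k.
have := rank_leq_mrank_split A Z; have := mrank_leq_rank A (~: Z).
move: lt_compl; rewrite /mlambda; lia.
Qed.

Lemma mkappa_leq m n (A : 'M[K]_(m, n)) (S T Z : {set 'I_n}) :
  S \subset Z -> Z \subset ~: T -> (mkappa A S T <= mlambda A Z)%N.
Proof.
move=> SZ ZT; rewrite /mkappa; elim: (index_enum _) (mem_index_enum Z) => // Z' s IHs.
rewrite inE big_cons => /orP [/eqP <- | /IHs le_Z]; first by rewrite SZ ZT geq_minl.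
by case: ifP => // _; rewrite geq_min le_Z orbT.
Qed.

Lemma mkappa_witness m n (A : 'M[K]_(m, n)) (S T : {set 'I_n}) :
  S \subset ~: T ->
  exists2 Z : {set 'I_n}, (S \subset Z) && (Z \subset ~: T) & mkappa A S T = mlambda A Z.
Proof.
move=> ST; rewrite /mkappa; apply: (big_ind (fun x => exists2 Z : {set 'I_n},
  (S \subset Z) && (Z \subset ~: T) & x = mlambda A Z)).
- by exists S; rewrite ?subxx.
- move=> _ _ [Z1 Z1ST ->] [Z2 Z2ST ->].
  by rewrite /minn; case: ifP => _; [exists Z1 | exists Z2].
- by move=> Z ZST; exists Z.
Qed.

End Connectivity.

Definition setSX n : {set 'I_((4 + 2) + n)} := [set j : 'I_((4 + 2) + n) | (j < 4 + 2)%N].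
Definition traceE n (Z : {set 'I_((4 + 2) + n)}) : {set 'I_n} :=
  [set k | rshift (4 + 2) k \in Z].

Section WPlus.
Variables (F0 : fieldType) (L : fieldExtType F0) (w : L) (r n : nat).
Variables (P Q : 'M[F0]_(2, n)) (R : 'M[F0]_(r - 2, n)).
Local Notation inj := (inj_mx L).
Local Notation W := (Wplus w P Q R).
Local Notation N := (col_mx (col_mx P Q) R).

Lemma lshift_setSX (j : 'I_(4 + 2)) : lshift n j \in setSX n.
Proof. by rewrite inE /= ltn_ord. Qed.

Lemma mrank_Wplus_geq (Z : {set 'I_((4 + 2) + n)}) : setSX n \subset Z ->
  (4 + \rank (colrestr R (traceE Z)) <= mrank W Z)%N.
Proof.
move=> SX_Z; rewrite /mrank /Wplus colrestr_row.
have -> : [set j | lshift n j \in Z] = setT.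
  by apply/setP => j; rewrite !inE (subsetP SX_Z) ?lshift_setSX.
rewrite colrestrT !colrestr_col !colrestr_map ?scale0r // -/(traceE Z).
set Nt := col_mx (map_mx _ (colrestr P _)) _; set Nb := map_mx _ (colrestr R _).
(* Column operations with the identity block on S clear the block (P; Q). *)
pose C : 'M[L]_((4 + 2) + n, (2 + 2) + n) :=
  col_mx (col_mx (row_mx 1%:M (- Nt)) 0) (row_mx 0 1%:M).
apply: leq_trans (mxrankM_maxl _ C).
have -> : row_mx (col_mx (row_mx 1%:M (col_mx (- w)%:M 1%:M)) 0) (col_mx Nt Nb) *m C
          = block_mx 1%:M 0 0 Nb.
  rewrite /C mul_row_col mul_col_mx mul_row_col mul1mx mul_mx_row mulmx0 mulmx1.
  rewrite addr0 mul0mx mulmx0 -[X in col_mx _ X]row_mx0 -block_mxEv.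
  by rewrite -[X in row_mx X _]col_mx0 -block_mxEh add_block_mx addr0 addNr !add0r.
by rewrite rank_diag_block_mx mxrank1 (inj_rank L).
Qed.

Lemma mrank_Wplus_compl (Z : {set 'I_((4 + 2) + n)}) : setSX n \subset Z ->
  mrank W (~: Z) = \rank (colrestr N (~: traceE Z)).
Proof.
move=> SX_Z; rewrite /mrank /Wplus colrestr_row.
have -> : [set j | lshift n j \in ~: Z] = set0.
  by apply/setP => j; rewrite !inE (subsetP SX_Z) ?lshift_setSX.
have -> : [set k | rshift (4 + 2) k \in ~: Z] = ~: traceE Z by apply/setP => k; rewrite !inE.
by rewrite colrestr0 rank_row_0mx -!inj_col colrestr_map ?scale0r // inj_rank.
Qed.

Lemma rank_Wplus_leq : (\rank W <= 4 + \rank R)%N.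
Proof.
rewrite /Wplus -block_mxEh block_mxEv; apply: leq_trans (rank_col_mx_leq _ _) _.
by rewrite rank_row_0mx (inj_rank L) leq_add2r rank_leq_row.
Qed.

Lemma mlambda_Wplus_SX : (mlambda W (setSX n) <= 4)%N.
Proof.
suff : (mrank W (setSX n) <= 4)%N.
  by have := mrank_leq_rank W (~: setSX n); rewrite /mlambda; lia.
rewrite /mrank /Wplus colrestr_row.
have -> : [set j | lshift n j \in setSX n] = setT.
  by apply/setP => j; rewrite inE lshift_setSX inE.
have -> : [set k | rshift (4 + 2) k \in setSX n] = set0.
  by apply/setP => k; rewrite !inE /= ltnNge leq_addr.
rewrite colrestrT colrestr0 rank_row_mx0; apply: leq_trans (rank_col_mx_leq _ _) _.
by rewrite mxrank0 addn0 rank_leq_row.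
Qed.

Lemma Wplus_sep_rank_bound (Z : {set 'I_((4 + 2) + n)}) :
  (2 <= r)%N -> setSX n \subset Z -> (mlambda W Z < 4)%N ->
  (\rank (colrestr R (traceE Z)) + \rank (colrestr N (~: traceE Z)) <= r + 1)%N.
Proof.
move=> r_ge2 SX_Z lt4; have := mrank_Wplus_geq SX_Z; have := mrank_Wplus_compl SX_Z.
have := rank_Wplus_leq; have := rank_leq_row R; move: lt4; rewrite /mlambda; lia.
Qed.

End WPlus.

Section Contraction.
Variable K : fieldType.

Lemma dualmxK m n (M : 'M[K]_(m, n)) : (dualmx (dualmx M) == M)%MS.
Proof.
have M_DD : (M <= dualmx (dualmx M))%MS.
  by rewrite /dualmx sub_kermx -[M in M *m _]trmxK -trmx_mul mulmx_ker trmx0.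
apply/andP; split=> //; case: (mxrank_leqif_sup M_DD) => _ <-.
by rewrite /dualmx !mxrank_ker !mxrank_tr mxrank_ker mxrank_tr subKn ?rank_leq_col.
Qed.

Definition ext0 n (y : 'rV[K]_n) : 'rV[K]_n.+1 :=
  \row_j oapp (fun k => y 0 k) 0 (unlift ord_max j).

Lemma ext0_mul_tr n p (y : 'rV[K]_n) (Z : 'M[K]_(p, n.+1)) :
  y *m (delete_last Z)^T = ext0 y *m Z^T.
Proof.
apply/rowP => i; rewrite !mxE big_ord_recr /= !mxE unlift_none mul0r addr0.
apply: eq_bigr => k _; rewrite !mxE.
have -> : widen_ord (leqnSn n) k = lift ord_max k.
  by apply: val_inj; rewrite /= /bump leqNgt ltn_ord.
by rewrite liftK.
Qed.

Lemma ext0_sub_par_ext m n (A : 'M[K]_(m, n)) e (y : 'rV_n) :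
  (ext0 y <= par_ext A e)%MS = (y <= A)%MS && (y 0 e == 0).
Proof.
apply/idP/andP => [/submxP [t yt] | [/submxP [t ->] /eqP ye0]].
  have yE k : y 0 k = (t *m A) 0 k.
    have := congr1 (fun M : 'rV_n.+1 => M 0 (lift ord_max k)) yt.
    by rewrite !mxE liftK /= => ->; apply: eq_bigr => i _; rewrite !mxE liftK.
  have tAe : (t *m A) 0 e = 0.
    have := congr1 (fun M : 'rV_n.+1 => M 0 ord_max) yt.
    rewrite !mxE unlift_none /= => /esym sum0; apply: (etrans _ sum0).
    by apply: eq_bigr => i _; rewrite !mxE unlift_none.
  have -> : y = t *m A by apply/rowP => k; rewrite yE.
  by rewrite submxMl tAe.
apply/submxP; exists t; apply/rowP => j; rewrite !mxE.
case: unliftP => [k ->|->]; rewrite ?liftK ?unlift_none /=.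
  by rewrite mxE; apply: eq_bigr => i _; rewrite !mxE liftK.
by rewrite -[LHS]ye0 mxE; apply: eq_bigr => i _; rewrite !mxE unlift_none.
Qed.

Lemma sub_pcontract m n (A : 'M[K]_(m, n)) e (y : 'rV_n) :
  (y <= pcontract A e)%MS = (y <= A)%MS && (y 0 e == 0).
Proof.
rewrite -ext0_sub_par_ext; have /eqmxP <- := dualmxK (par_ext A e).
by rewrite /pcontract /contract_last {1 3}/dualmx !sub_kermx ext0_mul_tr.
Qed.

Lemma nonloop_row m n (A : 'M[K]_(m, n)) e : nonloop A e -> exists i, A i e != 0.
Proof.
case: (boolP [exists i, A i e != 0]) => [/existsP // | /existsPn Ae0].
rewrite /nonloop /mrank; suff -> : colrestr A [set e] = 0 by rewrite mxrank0.
apply/matrixP => i j; rewrite colrestrE !mxE inE.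
by case: eqP => [->|//]; move/negbNE/eqP: (Ae0 i).
Qed.

(* Every row of A is a multiple of the row i0 plus a row vanishing at e. *)
Lemma pcontract_row_eqmx m n (A : 'M[K]_(m, n)) e i0 :
  A i0 e != 0 -> (A == col_mx (pcontract A e) (row i0 A))%MS.
Proof.
move=> Ai0e; apply/andP; split; last first.
  rewrite col_mx_sub row_sub andbT; apply/row_subP => i.
  by have := row_sub i (pcontract A e); rewrite sub_pcontract => /andP [].
apply/row_subP => i; set c := A i e / A i0 e.
rewrite -[row i A](subrK (c *: row i0 A)) addmx_sub //.
  apply: submx_trans (sub_col_mxl _ _); rewrite sub_pcontract !mxE divfK // subrr eqxx.
  by rewrite addmx_sub ?eqmx_opp ?scalemx_sub ?row_sub.
exact: scalemx_sub (sub_col_mxr _ _).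
Qed.

Lemma mapprox_pcontract_stack m p n (A : 'M[K]_(m, n)) e (B1 : 'rV[K]_n) (B2 : 'M[K]_(p, n)) :
  nonloop A e -> mapprox (pcontract A e) (col_mx B1 B2) ->
  exists2 d : 'rV[K]_n, (forall j, d 0 j != 0) &
    exists G1 : 'M[K]_(2, n), (A == col_mx G1 B2 *m diag_mx d)%MS.
Proof.
move=> /nonloop_row [i0 Ai0e] [d [d_nz pcontractE]]; exists d => //.
pose a := row i0 A *m diag_mx (\row_j (d 0 j)^-1); exists (col_mx B1 a).
have aE : a *m diag_mx d = row i0 A.
  by apply/rowP => j; rewrite /a !mul_mx_diag !mxE -mulrA mulVf ?mulr1.
have /eqmxP A_pr := pcontract_row_eqmx Ai0e.
have /eqmxP pr_B := col_mx_eqmx pcontractE (introT eqmxP (eqmx_refl (row i0 A))).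
have /eqmxP B_AC := col_mxAC_eqmx (B1 *m diag_mx d) (B2 *m diag_mx d) (a *m diag_mx d).
rewrite mul_col_mx in pr_B; rewrite aE in B_AC.
apply/eqmxP; rewrite mul_col_mx (mul_col_mx B1 a (diag_mx d)) aE.
exact: eqmx_trans A_pr (eqmx_trans pr_B B_AC).
Qed.

End Contraction.

Section Coordinates.
Variables (F0 : fieldType) (L : fieldExtType F0) (w : L).
Hypothesis dimL : \dim {:L} = 2%N.
Hypothesis genL : <<1%VS; w>>%VS = fullv.
Local Notation inj := (inj_mx L).

Definition basis_w1 : 2.-tuple L := [tuple w; 1].

(* The coordinates of x = c1 x + cw x * w in the basis (w, 1) of L over F0. *)
Definition cw : L -> F0 := coord basis_w1 0.
Definition c1 : L -> F0 := coord basis_w1 1.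

Lemma basis_w1_free : free basis_w1.
Proof.
rewrite /basis_w1 /= free_cons seq1_free oner_neq0 andbT span_seq1.
by apply/negP => /Fadjoin_idP w1; move: dimL; rewrite -genL w1 dimv1.
Qed.

Lemma c1_cw_dec x : x = (c1 x)%:A + cw x *: w.
Proof.
have x_span : x \in <<basis_w1>>%VS.
  suff -> : <<basis_w1>>%VS = fullv by exact: memvf.
  by apply/eqP; rewrite eqEdim subvf (eqnP basis_w1_free) dimL.
rewrite {1}(coord_span x_span) big_ord_recl big_ord1 addrC.
by have -> : lift ord0 ord0 = 1 :> 'I_2 by apply: val_inj.
Qed.

Lemma c1_dec a b : c1 (a%:A + b *: w) = a.
Proof.
rewrite /c1 linearD !linearZ /= (coord_free 1 1 basis_w1_free) (coord_free 0 1 basis_w1_free).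
by rewrite mulr1 mulr0 addr0.
Qed.

Lemma cw_dec a b : cw (a%:A + b *: w) = b.
Proof.
rewrite /cw linearD !linearZ /= (coord_free 1 0 basis_w1_free) (coord_free 0 0 basis_w1_free).
by rewrite mulr1 mulr0 add0r.
Qed.

Lemma c1_0 : c1 0 = 0. Proof. exact: linear0. Qed.
Lemma cw_0 : cw 0 = 0. Proof. exact: linear0. Qed.

Lemma inj_c1_cw p n (M : 'M[L]_(p, n)) :
  inj (map_mx c1 M) + w *: inj (map_mx cw M) = M.
Proof. by apply/matrixP => i j; rewrite [RHS]c1_cw_dec !mxE mulr_algr. Qed.

Lemma map_c1_dec p n (P Q : 'M[F0]_(p, n)) : map_mx c1 (inj P + w *: inj Q) = P.
Proof. by apply/matrixP => i j; rewrite !mxE mulr_algr c1_dec. Qed.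

Lemma map_cw_dec p n (P Q : 'M[F0]_(p, n)) : map_mx cw (inj P + w *: inj Q) = Q.
Proof. by apply/matrixP => i j; rewrite !mxE mulr_algr cw_dec. Qed.

Lemma mul_dec m p n (X1 Xw : 'M[F0]_(m, p)) (P Q : 'M[F0]_(p, n)) :
  let s := c1 (w * w) in let t := cw (w * w) in
  (inj X1 + w *: inj Xw) *m (inj P + w *: inj Q) =
  inj (X1 *m P + s *: (Xw *m Q)) + w *: inj (X1 *m Q + Xw *m P + t *: (Xw *m Q)).
Proof.
move=> s t; rewrite !injD !injZ !injM mulmxDl !mulmxDr -!scalemxAl -!scalemxAr.
move: (inj X1 *m inj P) (inj X1 *m inj Q) (inj Xw *m inj P) (inj Xw *m inj Q) => u1 u2 u3 u4.
apply/matrixP => i j; rewrite !mxE [w * (w * _)]mulrA [w * w]c1_cw_dec.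
rewrite mulrDl mulr_algl -scalerAl !mulrDr scalerAr -/s -/t mulr_algl.
set a := s *: _; set b := w * (t *: _); ring.
Qed.

Lemma map_c1_inj p n (B : 'M[F0]_(p, n)) : map_mx c1 (inj B) = B.
Proof. by have := map_c1_dec B 0; rewrite inj0 scaler0 addr0. Qed.

Lemma map_cw_inj p n (B : 'M[F0]_(p, n)) : map_mx cw (inj B) = 0.
Proof. by have := map_cw_dec B 0; rewrite inj0 scaler0 addr0. Qed.

Lemma inj_map_c1 p n (M : 'M[L]_(p, n)) : map_mx cw M = 0 -> inj (map_mx c1 M) = M.
Proof. by move=> cwM0; rewrite -[RHS]inj_c1_cw cwM0 inj0 scaler0 addr0. Qed.

(* The row space of coordmx M is the least subspace of F0^n whose L-span
   contains the row space of M. *)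
Definition coordmx p n (M : 'M[L]_(p, n)) : 'M[F0]_(p + p, n) :=
  col_mx (map_mx c1 M) (map_mx cw M).

Lemma coordmxS p1 p2 n (M1 : 'M[L]_(p1, n)) (M2 : 'M[L]_(p2, n)) :
  (M1 <= M2)%MS -> (coordmx M1 <= coordmx M2)%MS.
Proof.
case/submxP => X ->; rewrite -(inj_c1_cw X) -(inj_c1_cw M2) mul_dec.
rewrite /coordmx !map_c1_dec !map_cw_dec.
set P := map_mx c1 M2; set Q := map_mx cw M2.
have P_PQ : (P <= col_mx P Q)%MS := sub_col_mxl P Q.
have Q_PQ : (Q <= col_mx P Q)%MS := sub_col_mxr P Q.
by rewrite col_mx_sub !addmx_sub ?scalemx_sub ?(submx_trans (submxMl _ _)).
Qed.

Lemma rank_leq_coordmx p n (M : 'M[L]_(p, n)) : (\rank M <= \rank (coordmx M))%N.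
Proof.
rewrite -(inj_rank L) inj_col; apply: mxrankS; rewrite -{1}(inj_c1_cw M).
by rewrite addmx_sub ?scalemx_sub ?sub_col_mxl ?sub_col_mxr.
Qed.

(* The F0-combination c = (cP, cQ) of the rows of P and Q landing in the row
   space of D yields alpha = (cQ - t cP) + w cP, by w^2 = s + t w. *)
Lemma defined_comb_of_rank_lt k p n (P Q : 'M[F0]_(k, n)) (D : 'M[F0]_(p, n)) :
  (\rank (col_mx (col_mx P Q) D) < \rank D + (k + k))%N ->
  exists2 alpha : 'rV[L]_k, alpha != 0 &
    exists f z, alpha *m (inj P + w *: inj Q) = inj f + w *: inj (z *m D).
Proof.
case/row_comb_sub_of_rank_lt => c c0 /submxP [z cPQ_zD].
set cP := lsubmx c; set cQ := rsubmx c; set a := cQ - cw (w * w) *: cP.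
exists (inj a + w *: inj cP).
  apply: contraNneq c0 => alpha0.
  have alpha0' : inj a + w *: inj cP = inj 0 + w *: inj 0.
    by rewrite alpha0 inj0 scaler0 addr0.
  have := congr1 (map_mx cw) alpha0'; rewrite !map_cw_dec => cP0.
  have := congr1 (map_mx c1) alpha0'; rewrite !map_c1_dec /a cP0 scaler0 subr0 => cQ0.
  by rewrite -[c]hsubmxK -/cP -/cQ cP0 cQ0 row_mx0.
exists (a *m P + c1 (w * w) *: (cP *m Q)), z; rewrite mul_dec -cPQ_zD.
rewrite -[c]hsubmxK mul_row_col -/cP -/cQ; congr (_ + w *: inj _).
by rewrite /a mulmxBl -scalemxAl addrAC subrK addrC.
Qed.

Lemma rank_add_cw_leq_coordmx k p n (G1 : 'M[L]_(k, n)) (B : 'M[L]_(p, n))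
    (Z : {set 'I_n}) :
  map_mx cw (colrestr B Z) = 0 ->
  (\rank (map_mx c1 (colrestr B Z)) + (k + k) <=
     \rank (col_mx (col_mx (map_mx c1 (colrestr G1 Z)) (map_mx cw (colrestr G1 Z)))
                   (map_mx c1 (colrestr B Z))))%N ->
  (\rank (colrestr (col_mx G1 B) Z) + \rank (map_mx cw (colrestr G1 Z))
     <= \rank (coordmx (colrestr (col_mx G1 B) Z)))%N.
Proof.
set GZ := colrestr G1 Z; set D := map_mx c1 (colrestr B Z) => cwB0 rank_ge.
have rank_G1B : (\rank (colrestr (col_mx G1 B) Z) <= k + \rank D)%N.
  rewrite colrestr_col -(inj_map_c1 cwB0) -(inj_rank L D) -/GZ.
  by apply: leq_trans (rank_col_mx_leq _ _) _; rewrite leq_add2r rank_leq_row.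
have rank_cw := rank_leq_row (map_mx cw GZ).
suff : (\rank (col_mx (col_mx (map_mx c1 GZ) (map_mx cw GZ)) D)
          <= \rank (coordmx (colrestr (col_mx G1 B) Z)))%N by lia.
apply: mxrankS; rewrite /coordmx colrestr_col !map_col_mx -/GZ -/D !col_mx_sub.
rewrite (submx_trans (sub_col_mxl _ D) (sub_col_mxl _ _)).
rewrite (submx_trans (sub_col_mxl _ (map_mx cw (colrestr B Z))) (sub_col_mxr _ _)).
by rewrite (submx_trans (sub_col_mxr (map_mx c1 GZ) _) (sub_col_mxl _ _)).
Qed.

(* While the F0-closure of the rows restricted to Z is small, some nonzero
   combination of the rows of G1 is, on Z, defined over F0 modulo B; that
   combination replaces a row of G1 and joins B. *)
Lemma exists_basis_cw_rank_leq n k p (G1 : 'M[L]_(k, n)) (B : 'M[L]_(p, n))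
    (Z : {set 'I_n}) :
  map_mx cw (colrestr B Z) = 0 ->
  exists2 Y : 'M[L]_(k, n), (col_mx Y B == col_mx G1 B)%MS &
    (\rank (colrestr (col_mx G1 B) Z) + \rank (map_mx cw (colrestr Y Z))
       <= \rank (coordmx (colrestr (col_mx G1 B) Z)))%N.
Proof.
elim: k p G1 B => [|k IHk] p G1 B cwB0.
  exists G1; first exact/eqmxP.
  by rewrite [map_mx _ _]flatmx0 mxrank0 addn0 rank_leq_coordmx.
set GZ := colrestr G1 Z; set D := map_mx c1 (colrestr B Z).
have BZ : colrestr B Z = inj D by rewrite inj_map_c1.
have [rank_lt | rank_ge] := ltnP (\rank (col_mx (col_mx (map_mx c1 GZ) (map_mx cw GZ)) D))
                                 (\rank D + (k.+1 + k.+1)).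
  have [alpha alpha0 [f [z alphaGZ]]] := defined_comb_of_rank_lt rank_lt.
  rewrite inj_c1_cw // in alphaGZ.
  have [j alpha_j] : exists j, alpha 0 j != 0.
    case: (pickP (fun j => alpha 0 j != 0)) => [j|alpha_0]; first by exists j.
    by case/eqP: alpha0; apply/rowP => j; move/negbFE: (alpha_0 j) => /eqP ->; rewrite mxE.
  set b := - (w *: (inj z *m B)); set y := alpha *m G1 + b.
  have yZ : colrestr y Z = inj f.
    by rewrite colrestrD colrestrN colrestrZ !colrestrM -/GZ alphaGZ BZ -injM addrK.
  have cwyB0 : map_mx cw (colrestr (col_mx y B) Z) = 0.
    by rewrite colrestr_col map_col_mx yZ map_cw_inj // cwB0 col_mx0.
  have [Y' /eqmxP Y'eq Y'rank] := IHk _ (row' j G1) (col_mx y B) cwyB0.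
  have /eqmxP eqrows : (col_mx (row' j G1) (col_mx y B) == col_mx G1 B)%MS.
    by apply: eqmx_col_row'_comb alpha_j _; rewrite /b eqmx_opp scalemx_sub ?submxMl.
  have eqrowsZ : (colrestr (col_mx (row' j G1) (col_mx y B)) Z
                  :=: colrestr (col_mx G1 B) Z)%MS.
    by apply/eqmxP/andP; split; apply: colrestrS; rewrite eqrows.
  exists (col_mx y Y').
    have /eqmxP CA := col_mxCA_eqmx y Y' B.
    by apply/eqmxP; apply: eqmx_trans CA (eqmx_trans Y'eq eqrows).
  have eqcoordZ : (coordmx (colrestr (col_mx (row' j G1) (col_mx y B)) Z)
                  :=: coordmx (colrestr (col_mx G1 B) Z))%MS.
    by apply/eqmxP/andP; split; apply: coordmxS; rewrite eqrowsZ.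
  rewrite [colrestr (col_mx y Y') Z]colrestr_col (map_col_mx cw (colrestr y Z)).
  rewrite yZ map_cw_inj // (rank_col_0mx 1 (map_mx cw (colrestr Y' Z))).
  by rewrite -eqrowsZ -eqcoordZ.
exists G1; first exact/eqmxP.
exact: rank_add_cw_leq_coordmx cwB0 rank_ge.
Qed.

Lemma rank_coordmx_stack p q n (G1 : 'M[L]_(p, n)) (R : 'M[F0]_(q, n)) (Y : {set 'I_n}) :
  \rank (coordmx (colrestr (col_mx G1 (inj R)) Y)) =
  \rank (colrestr (col_mx (col_mx (map_mx c1 G1) (map_mx cw G1)) R) Y).
Proof.
rewrite /coordmx !colrestr_col !colrestr_map ?scale0r ?c1_0 ?cw_0 //.
rewrite !map_col_mx map_c1_inj // map_cw_inj //.
set A := map_mx c1 _; set C := map_mx cw _; set B := colrestr R Y.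
have /eqmxP C0_C : (col_mx C (0 : 'M_(q, n)) == C)%MS.
  by apply/eqmxP; apply: eqmx_trans (eqmx_sym (addsmxE _ _)) (addsmx0 _ _).
have /eqmxP := col_mx_eqmx (introT eqmxP (eqmx_refl (col_mx A B))) (introT eqmxP C0_C).
by move=> ->; apply/eqmx_rank/col_mxAC_eqmx.
Qed.

Lemma Wplus_kappa_ne4 r n (G1 : 'M[L]_(2, n)) (R : 'M[F0]_(r - 2, n)) (K : {set 'I_n}) :
  \rank (col_mx G1 (inj R)) = r -> (2 <= r)%N -> vert_conn (col_mx G1 (inj R)) 5 ->
  (4 <= mrank (col_mx G1 (inj R)) K)%N ->
  mkappa (Wplus w (map_mx c1 G1) (map_mx cw G1) R) (setSX n)
         [set rshift (4 + 2) k | k in K] != 4%N ->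
  exists Y, mrank (col_mx G1 (inj R)) Y = r /\
    (\rank (coordmx (colrestr (col_mx G1 (inj R)) Y)) + \rank (colrestr R (~: Y)) <= r + 1)%N.
Proof.
set G := col_mx G1 (inj R); set W := Wplus _ _ _ _; set KS := [set _ | k in K].
move=> rG r_ge2 connG rK /eqP kappa_ne4.
have SX_KS : setSX n \subset ~: KS.
  apply/subsetP => j; rewrite !inE => lt6; apply/imsetP => [[k _ jk]].
  by move: lt6; rewrite jk /= ltnNge leq_addr.
have [Z /andP [SX_Z Z_KS] kappaZ] := mkappa_witness W SX_KS.
have lt4 : (mlambda W Z < 4)%N.
  have := mkappa_leq W (subxx (setSX n)) SX_KS.
  have := mlambda_Wplus_SX w (map_mx c1 G1) (map_mx cw G1) R.
  by rewrite -/W kappaZ in kappa_ne4 *; lia.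
set Y := traceE Z.
have rank_sep := Wplus_sep_rank_bound r_ge2 SX_Z lt4.
rewrite -/Y -rank_coordmx_stack -/G in rank_sep.
have rGY : (mrank G Y <= 2 + \rank (colrestr R Y))%N.
  rewrite /mrank colrestr_col colrestr_map ?scale0r // -(inj_rank L (colrestr R Y)).
  by apply: leq_trans (rank_col_mx_leq _ _) _; rewrite leq_add2r rank_leq_row.
have rGY' : (mrank G (~: Y) <= \rank (coordmx (colrestr G (~: Y))))%N.
  exact: rank_leq_coordmx.
have K_Y : K \subset ~: Y.
  apply/subsetP => k kK; rewrite !inE; apply/negP => kZ.
  by have := subsetP Z_KS _ kZ; rewrite inE imset_f.
have rGK := mrankS G K_Y.
have lambda_lt : (mlambda G Y < 5)%N by rewrite /mlambda; lia.
have lambda_lt_compl : (mlambda G Y < mrank G (~: Y))%N by rewrite /mlambda; lia.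
have rGY_full := vert_conn_mrank_compl connG lambda_lt lambda_lt_compl.
by exists (~: Y); rewrite setCK rGY_full rG; split => //; lia.
Qed.

Lemma mapprox_stackPQR m q n (A : 'M[L]_(m, n)) (G1 Y : 'M[L]_(2, n))
    (R : 'M[F0]_(q, n)) (d : 'rV[L]_n) :
  (forall j, d 0 j != 0) -> (A == col_mx G1 (inj R) *m diag_mx d)%MS ->
  (col_mx Y (inj R) == col_mx G1 (inj R))%MS ->
  mapprox A (stackPQR w (map_mx c1 Y) (map_mx cw Y) R).
Proof.
move=> d_nz /eqmxP AG /eqmxP YG; exists d; split => //; rewrite /stackPQR inj_c1_cw.
by apply/eqmxP; apply: eqmx_trans AG (eqmxMr _ (eqmx_sym YG)).
Qed.

Lemma exists_coordinate_rows r n (G1 : 'M[L]_(2, n)) (R : 'M[F0]_(r - 2, n)) :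
  \rank (col_mx G1 (inj R)) = r -> vert_conn (col_mx G1 (inj R)) 5 ->
  exists2 Y : 'M[L]_(2, n), (col_mx Y (inj R) == col_mx G1 (inj R))%MS &
    (exists I : {set 'I_n},
        (\rank (colrestr R I) + \rank (colrestr (map_mx cw Y) (~: I)) <= 1)%N)
    \/ (forall K : {set 'I_n}, (4 <= mrank (col_mx G1 (inj R)) K)%N ->
          mkappa (Wplus w (map_mx c1 Y) (map_mx cw Y) R) (setSX n)
                 [set rshift (4 + 2) k | k in K] = 4%N).
Proof.
set G := col_mx G1 (inj R) => rG connG.
have [r_le3 | r_ge4] := leqP r 3.
  exists G1; first exact/eqmxP.
  left; exists setT; rewrite colrestrT setCT colrestr0 mxrank0 addn0.
  by apply: leq_trans (rank_leq_row R) _; lia.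
case: (boolP [forall K : {set 'I_n}, (4 <= mrank G K)%N ==>
   (mkappa (Wplus w (map_mx c1 G1) (map_mx cw G1) R) (setSX n)
           [set rshift (4 + 2) k | k in K] == 4%N)]) => [/forallP kappa4 | /forallPn [K]].
  exists G1; first exact/eqmxP.
  by right => K rK; apply/eqP; have := kappa4 K; rewrite rK.
rewrite negb_imply => /andP [rK kappa_ne4].
have [Y [rGY rank_sep]] := Wplus_kappa_ne4 rG (ltnW (ltnW r_ge4)) connG rK kappa_ne4.
have cwRY : map_mx cw (colrestr (inj R) Y) = 0.
  by rewrite colrestr_map ?scale0r // map_cw_inj.
have [Y3 Y3G rank_Y3] := exists_basis_cw_rank_leq G1 cwRY.
exists Y3 => //; left; exists (~: Y); rewrite setCK colrestr_map ?cw_0 //.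
(* Identify two elaborations of this rank that lia would treat as distinct atoms. *)
set c := \rank (map_mx cw (colrestr Y3 Y)) in rank_Y3 *.
by move: rGY rank_sep; rewrite /mrank; lia.
Qed.

End Coordinates.

Theorem lemma8p1 (F0 : fieldType) (L : fieldExtType F0) (w : L)
  (hdim : \dim {:L} = 2%N) (hgen : <<1%VS; w>>%VS = fullv)
  (m n r : nat) (A : 'M[L]_(m, n)) (hr : \rank A = r)
  (hconn : vert_conn A 5) (e : 'I_n) (he : nonloop A e)
  (u0 v0 : 'rV[F0]_n) (R : 'M[F0]_(r - 2, n))
  (hcon : mapprox (pcontract A e)
            (col_mx (inj_mx L u0 + w *: inj_mx L v0) (inj_mx L R))) :
  exists P Q : 'M[F0]_(2, n),
    mapprox A (stackPQR w P Q R) /\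
    ((exists I : {set 'I_n},
        (\rank (colrestr R I) + \rank (colrestr Q (~: I)) <= 1)%N)
     \/
     (forall K : {set 'I_n}, (4 <= mrank A K)%N ->
        mkappa (Wplus w P Q R) [set j : 'I_((4 + 2) + n) | (j < 4 + 2)%N]
               [set rshift (4 + 2) k | k in K] = 4%N)).
Proof.
have [d d_nz [G1 AG]] := mapprox_pcontract_stack he hcon.
have mrank_AG X : mrank A X = mrank (col_mx G1 (inj_mx L R)) X := mrank_eqmx_diag X d_nz AG.
have rG : \rank (col_mx G1 (inj_mx L R)) = r by rewrite -mrankT -mrank_AG mrankT.
have connG := vert_conn_mrank_eq mrank_AG hconn.
have [Y YG outcome] := exists_coordinate_rows hdim hgen rG connG.
exists (map_mx (c1 w) Y), (map_mx (cw w) Y); split; first exact: mapprox_stackPQR AG YG.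
case: outcome => [?|kappa4]; first by left.
by right => K; rewrite mrank_AG; exact: kappa4.
Qed.
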